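(* Let $k$ be an integer and $l,t$ integers with $1\le l,t\le k-2\le q-2$. Let $r\in\mathbb F$ and let $X:\mathbb F\to C$ be any function. Then $$\sum_{b\in\mathbb F}\ \sum_{s\in\mathbb F,\,s\ne b}\frac{(b-r)^t}{(s-b)^l}X(s)=\begin{cases}\sum_{s\in\mathbb F}(-1)^{l+1}\binom{t}{l}(s-r)^{t-l}X(s)&\text{if } t>l,\\ \sum_{s\in\mathbb F}(-1)^{l+1}X(s)&\text{if } t=l,\\ 0&\text{if } t<l.\end{cases}$$
   Context: $\mathbb F$ is a finite field with $q$ elements, and $C$ is a field containing $\mathbb F$ (in the paper, the completion of an algebraic closure of $\mathbb F((1/T))$). Binomial coefficients are read in $\mathbb F$; $0^0=1$. *)

From HB Require Import structures.
From mathcomp Require Import all_boot all_order all_algebra all_field.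
Set Implicit Arguments. Unset Strict Implicit. Unset Printing Implicit Defensive.

From HB Require Import structures.
From mathcomp Require Import all_boot all_order all_algebra all_field.
From mathcomp Require Import fingroup cyclic ring zify.
Import GRing.Theory.
Local Open Scope ring_scope.

(* Substituting b = s - u, the coefficient of X s becomes
   sum_(u <> 0) (s - r - u)^t / u^l.  Expanding (s - r - u)^t binomially turns
   it into a combination of power sums sum_(u <> 0) u^m with |m| <= q - 2; these
   vanish for m <> 0, because multiplying by some a <> 0 with a^m <> 1 permutes
   the units, and equal q - 1 = -1 for m = 0.  Only the binomial term of index l
   survives, leaving (-1)^(l+1) C(t, l) (s - r)^(t - l), which covers all three
   cases since C(t, l) = 0 when t < l. *)

Section FinFieldSums.

Variable F : finFieldType.

Lemma natr_card_finField : #|F|%:R = 0 :> F.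
Proof. by rewrite -FinRing.zmodXgE -cardsT expg_cardG ?inE. Qed.

Lemma card_nonzero_finField : #|[pred u : F | u != 0]| = #|F|.-1.
Proof. by rewrite -(cardC1 (0 : F)). Qed.

Lemma sum_nonzero_one : \sum_(u : F | u != 0) 1 = -1 :> F.
Proof.
rewrite sumr_const card_nonzero_finField -[RHS]add0r -natr_card_finField.
by rewrite -(ltn_predK (finNzRing_gt1 F)) mulrSr addrK.
Qed.

Lemma exists_nonzero_expr_neq1 m :
  (0 < m < #|F|.-1)%N -> exists2 a : F, a != 0 & a ^+ m != 1.
Proof.
case/andP=> m_gt0 m_lt.
have [a /andP[a0 am] | all_roots] := pickP [pred a : F | (a != 0) && (a ^+ m != 1)].
  by exists a.
have units_roots : all m.-unity_root (enum [pred u : F | u != 0]).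
  apply/allP=> u; rewrite mem_enum inE => u0; apply/unity_rootP.
  by move: (all_roots u); rewrite /= u0 => /negbFE/eqP.
have := max_unity_roots m_gt0 units_roots (enum_uniq _).
by rewrite -cardE card_nonzero_finField leqNgt m_lt.
Qed.

Lemma sum_nonzero_expz (m : int) :
  (`|m| < #|F|.-1)%N -> \sum_(u : F | u != 0) u ^ m = if m == 0 then -1 else 0.
Proof.
move=> m_lt; have [-> | m0] := eqVneq m 0.
  by rewrite (eq_bigr (fun=> 1)) ?sum_nonzero_one.
have [a a0 am] : exists2 a : F, a != 0 & a ^ m != 1.
  have m_range : (0 < `|m| < #|F|.-1)%N by rewrite absz_gt0 m0.
  have [a a0 am] := exists_nonzero_expr_neq1 _ m_range.
  exists a => //; apply: contra am; case: (intP m) => // n.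
  by rewrite -invr_expz invr_eq1 abszN.
set S := \sum_(u | _) _.
have S_fixed : S = a ^ m * S.
  rewrite /S [LHS](reindex_inj (mulfI a0)) /= mulr_sumr.
  apply: eq_big => [u | u _]; first by rewrite mulf_eq0 (negbTE a0).
  exact: expfzMl.
apply/eqP; move/eqP: S_fixed; rewrite -subr_eq0 -{1}[S]mul1r -mulrBl mulf_eq0.
by rewrite subr_eq0 eq_sym (negbTE am).
Qed.

Lemma sum_nonzero_subr_expr_div (c : F) t l :
    (t < #|F|.-1)%N -> (l < #|F|.-1)%N ->
  \sum_(u : F | u != 0) (c - u) ^+ t / u ^+ l =
    (-1) ^+ l.+1 * 'C(t, l)%:R * c ^+ (t - l).
Proof.
move=> t_lt l_lt.
pose a (i : nat) := c ^+ (t - i) * (-1) ^+ i *+ 'C(t, i).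
have expand u : u != 0 ->
    (c - u) ^+ t / u ^+ l = \sum_(i < t.+1) a i * u ^ (i%:Z - l%:Z).
  move=> u0; rewrite exprDn mulr_suml; apply: eq_bigr => i _.
  rewrite expfzDr // -invr_expz exprNn /a -!exprnP.
  by rewrite !mulrnAl !mulrA.
rewrite (eq_bigr _ expand) exchange_big /=.
rewrite (eq_bigr (fun i : 'I_t.+1 => if i == l :> nat then - a i else 0)); last first.
  move=> i _; rewrite -mulr_sumr sum_nonzero_expz; last by have := ltn_ord i; lia.
  by rewrite subr_eq0 eqz_nat; case: eqP; rewrite ?mulrN1 ?mulr0.
rewrite -big_mkcond (big_ord1_eq _ (fun j => - a j)) /a ltnS.
case: leqP => [_ | lt_tl]; last by rewrite bin_small // mulr0n mulr0 mul0r.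
by rewrite exprS -mulr_natr; ring.
Qed.

End FinFieldSums.

Theorem proposition8p5 (F : finFieldType) (C : fieldType)
    (iota : {rmorphism F -> C}) (k l t : nat)
    (hl1 : (1 <= l)%N) (ht1 : (1 <= t)%N)
    (hlk : (l <= k - 2)%N) (htk : (t <= k - 2)%N) (hkq : (k - 2 <= #|F| - 2)%N)
    (r : F) (X : F -> C) :
  \sum_(b : F) \sum_(s : F | s != b)
      iota ((b - r) ^+ t / (s - b) ^+ l) * X s =
  if (l < t)%N then
    \sum_(s : F) iota ((-1) ^+ l.+1 * ('C(t, l))%:R * (s - r) ^+ (t - l)) * X s
  else if t == l then
    \sum_(s : F) iota ((-1) ^+ l.+1) * X s
  else 0.
Proof.
have inner s : \sum_(b | s != b) (b - r) ^+ t / (s - b) ^+ l =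
    (-1) ^+ l.+1 * 'C(t, l)%:R * (s - r) ^+ (t - l).
  have t_lt : (t < #|F|.-1)%N by lia.
  have l_lt : (l < #|F|.-1)%N by lia.
  rewrite -sum_nonzero_subr_expr_div //.
  rewrite (reindex_inj (subrI s)) /=; apply: eq_big => [u | u _].
    by rewrite -subr_eq0 subKr.
  by rewrite subKr addrAC.
rewrite (exchange_big_dep xpredT) //=.
under eq_bigr => s _ do rewrite -mulr_suml -rmorph_sum inner.
case: ltnP => [// | le_tl]; case: eqP => [-> | /eqP ne_tl].
  by apply: eq_bigr => s _; rewrite binn subnn expr0 !mulr1.
have lt_tl : (t < l)%N by rewrite ltn_neqAle ne_tl.
by apply: big1 => s _; rewrite bin_small // mulr0n mulr0 mul0r rmorph0 mul0r.
Qed.
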